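(* Let $\Gamma$ be a single-player extensive-form game with no chance nodes and no absentmindedness. Then $\mathrm{VoR}^{\mathrm{opt}}(\Gamma)=1$. Further, both $\Gamma$ and $\mathrm{pr}_1(\Gamma)$ admit a pure optimal strategy.
   Context: A single-player extensive-form game consists of a finite rooted tree (nodes $\mathcal H$, leaves $\mathcal Z$, actions $A_h$), nonterminal nodes belonging to Player 1 or to chance, utility $u_1:\mathcal Z\to\mathbb R_{\ge0}$, and a partition of Player 1's nodes into infosets with common action sets $A_I$. For a node $h$, $\mathrm{obs}(h)=(i_k,I_k,a_k)_k$ lists the player, infoset and action taken along the root-to-$h$ path (excluding $h$); $\mathrm{obs}_1(h)$ is its restriction to Player 1. The game has absentmindedness if some infoset appears more than once among the $I_k$ of $\mathrm{obs}(h)$ for some $h$. $\mathrm{pr}_1(\Gamma)$ has the same tree and utilities, with each infoset partitioned into classes of $h\sim h'\iff\mathrm{obs}_1(h)=\mathrm{obs}_1(h')$. A behavioral strategy $\pi$ assigns $\pi(\cdot\mid I)\in\Delta(A_I)$ to each infoset; it is pure if each is a point mass. $U_1(\pi)$ is the expected utility; an optimal strategy maximizes $U_1$, with value $u_1(\mathrm{opt}(\cdot))$. $\mathrm{VoR}^{\mathrm{opt}}(\Gamma)=u_1(\mathrm{opt}(\mathrm{pr}_1(\Gamma)))/u_1(\mathrm{opt}(\Gamma))$. *)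

From HB Require Import structures.
From mathcomp Require Import all_boot all_order all_algebra.
From mathcomp Require Import classical_sets reals.
Set Implicit Arguments. Unset Strict Implicit. Unset Printing Implicit Defensive.
Import Order.TTheory GRing.Theory Num.Theory.
Local Open Scope ring_scope.

(* Player-1 nodes carrying the same label I : Info.                        *)
(* Nodes h are identified with their root-to-h action paths.               *)

Section Games.
Variables (R : realType) (Act : finType).

Inductive gtree (Info : Type) : Type :=
| Leaf of R
| Chance of {set Act} & (Act -> R) & (Act -> gtree Info)
| Decision of Info & (Act -> gtree Info).

Record game (Info : Type) := Game {
  root : gtree Info;
  acts : Info -> {set Act} }.

Variable Info : eqType.
Implicit Types (G : game Info) (t : gtree Info) (p : seq Act).

Fixpoint subtree (A : Info -> {set Act}) t p : option (gtree Info) :=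
  match p with
  | [::] => Some t
  | a :: p' =>
    match t with
    | Leaf _ => None
    | Chance Sa _ f => if a \in Sa then subtree A (f a) p' else None
    | Decision J f => if a \in A J then subtree A (f a) p' else None
    end
  end.

Definition node G p := subtree (acts G) (root G) p.

(* The player/infoset pair is encoded as an option:
   None = chance (no infoset), Some I = Player 1 at infoset I. *)
Fixpoint obs_tree t p : seq (option Info * Act) :=
  match p with
  | [::] => [::]
  | a :: p' =>
    match t with
    | Leaf _ => [::]
    | Chance _ _ f => (None, a) :: obs_tree (f a) p'
    | Decision J f => (Some J, a) :: obs_tree (f a) p'
    end
  end.

Definition obs G p := obs_tree (root G) p.

Definition obs1 G p : seq (Info * Act) :=
  pmap (fun e : option Info * Act =>
          if e.1 is Some J then Some (J, e.2) else None) (obs G p).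

Definition absentminded G : Prop :=
  exists p, node G p <> None /\ ~~ uniq [seq e.1 | e <- obs1 G p].

Definition is_chance_node t : bool :=
  if t is Chance _ _ _ then true else false.

Definition no_chance G : Prop :=
  forall p t, node G p = Some t -> ~~ is_chance_node t.

Definition wf_game G : Prop :=
  (forall J, acts G J != finset.set0) /\
  forall p t, node G p = Some t ->
    match t with
    | Leaf u => is_true (0 <= u)
    | Chance Sa q _ => [/\ Sa != finset.set0, (forall a, a \in Sa -> 0 <= q a)
                         & \sum_(a in Sa) q a = 1]
    | Decision _ _ => True
    end.

Definition is_strategy G (pi : Info -> Act -> R) : Prop :=
  forall J, [/\ forall a, 0 <= pi J a,
                forall a, a \notin acts G J -> pi J a = 0
              & \sum_(a in acts G J) pi J a = 1].

Definition is_pure G (pi : Info -> Act -> R) : Prop :=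
  forall J, exists2 a, a \in acts G J & forall b, pi J b = (b == a)%:R.

Fixpoint EU_tree (A : Info -> {set Act}) (pi : Info -> Act -> R) t : R :=
  match t with
  | Leaf u => u
  | Chance Sa q f => \sum_(a in Sa) q a * EU_tree A pi (f a)
  | Decision J f => \sum_(a in A J) pi J a * EU_tree A pi (f a)
  end.

Definition U1 G pi := EU_tree (acts G) pi (root G).

Definition optimal G pi : Prop :=
  is_strategy G pi /\ forall pi', is_strategy G pi' -> U1 G pi' <= U1 G pi.

Definition optval G : R :=
  sup [set x | exists pi, is_strategy G pi /\ x = U1 G pi]%classic.

(* pr_1(G): same tree and utilities; each Player-1 node h of infoset I is
   relabelled (I, obs_1(h)), so that each infoset I is partitioned into the
   classes h ~ h' <-> obs_1(h) = obs_1(h'). *)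
Fixpoint pr1_tree G p t : gtree (Info * seq (Info * Act)) :=
  match t with
  | Leaf u => Leaf _ u
  | Chance Sa q f => Chance Sa q (fun a => pr1_tree G (rcons p a) (f a))
  | Decision J f => Decision (J, obs1 G p) (fun a => pr1_tree G (rcons p a) (f a))
  end.

Definition pr1 G : game (Info * seq (Info * Act)) :=
  Game (pr1_tree G [::] (root G)) (fun J => acts G J.1).

End Games.

Definition VoR (R : realType) (Act : finType) (Info : eqType)
  (G : game R Act Info) : R := optval (pr1 G) / optval G.

(* Without chance nodes a pure strategy follows a single root-to-leaf path, so
   only the infosets met along that path matter.  Backward induction picks, at
   each decision node, an action whose subtree has the largest maximal utility;
   without absentmindedness the infoset of a node never reappears below it, so
   these choices never conflict along the played path and define a pure
   strategy reaching the best leaf.  No behavioral strategy does better, as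
   its expected utility is an average of leaf utilities.  This bound depends
   only on the tree, which pr_1(Gamma) shares, and there the same strategy,
   read through the relabelling I |-> (I, obs_1(h)), plays identically. *)
From Pilot Require Import Defs.
From HB Require Import structures.
From mathcomp Require Import all_boot all_order all_algebra.
From mathcomp Require Import classical_sets reals.
Import Order.TTheory GRing.Theory Num.Theory.
Local Open Scope ring_scope.
Set Implicit Arguments. Unset Strict Implicit.

Lemma sup_eq_max (R : realType) (S : set R) (m : R) :
  S m -> (forall x, S x -> x <= m) -> sup S = m.
Proof.
move=> Sm ub; apply/eqP; rewrite eq_le; apply/andP; split.
  by apply: ge_sup; [exists m | move=> x /ub].
have hasS : has_sup S by split; [exists m | exists m => x /ub].
exact: sup_upper_bound hasS _ Sm.
Qed.

Section DecisionTrees.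
Variables (R : realType) (Act : finType) (Info : eqType).
Variable A : Info -> {set Act}.
Hypothesis A_neq0 : forall J, A J != finset.set0.
Implicit Types (t : gtree R Act Info) (p : seq Act) (pi : Info -> Act -> R).

Fixpoint nonneg_decision_tree t : Prop :=
  match t with
  | Leaf u => 0 <= u
  | Chance _ _ _ => False
  | Decision J f => forall a, a \in A J -> nonneg_decision_tree (f a)
  end.

(* The [0] at chance nodes is a junk value: no chance node is reachable in a
   [nonneg_decision_tree]. *)
Fixpoint backward_value t : R :=
  match t with
  | Leaf u => u
  | Chance _ _ _ => 0
  | Decision J f => \big[Order.max/0]_(a in A J) backward_value (f a)
  end.

Definition obs1_tree t p : seq (Info * Act) :=
  pmap (fun e : option Info * Act =>
          if e.1 is Some J then Some (J, e.2) else None) (obs_tree t p).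

Definition infoset_occurs J t :=
  exists2 p, subtree A t p <> None & J \in [seq e.1 | e <- obs1_tree t p].

Definition not_absentminded_tree t :=
  forall p, subtree A t p <> None -> uniq [seq e.1 | e <- obs1_tree t p].

Definition strategy pi := forall J,
  [/\ forall a, 0 <= pi J a, forall a, a \notin A J -> pi J a = 0
    & \sum_(a in A J) pi J a = 1].

Definition pure_strategy pi :=
  forall J, exists2 a, a \in A J & forall b, pi J b = (b == a)%:R.

Lemma pure_strategy_strategy pi : pure_strategy pi -> strategy pi.
Proof.
move=> piP J; have [a aA pia] := piP J; split.
- by move=> b; rewrite pia ler0n.
- by move=> b; apply: contraNeq; rewrite pia pnatr_eq0 eqb0 negbK => /eqP->.
- rewrite (bigD1 a) //= pia eqxx big1 ?addr0 // => b /andP[_ /negbTE nba].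
  by rewrite pia nba.
Qed.

Lemma backward_value_ge0 t : nonneg_decision_tree t -> 0 <= backward_value t.
Proof. by case: t => //= J f _; exact: bigmax_ge_id. Qed.

Lemma EU_le_backward_value pi t :
  strategy pi -> nonneg_decision_tree t -> EU_tree A pi t <= backward_value t.
Proof.
move=> piS; elim: t => [u|S q f IH|J f IH] //= tJ.
have [pi_ge0 _ pi_sum1] := piS J.
apply: le_trans (_ : \sum_(a in A J) pi J a * backward_value (Decision J f) <= _).
  apply: ler_sum => a aA; apply: ler_wpM2l => //.
  by apply: le_trans (IH a (tJ a aA)) _; exact: le_bigmax_cond.
by rewrite -mulr_suml pi_sum1 mul1r.
Qed.

Lemma obs1_tree_Decision J f a p :
  obs1_tree (Decision J f) (a :: p) = (J, a) :: obs1_tree (f a) p.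
Proof. by []. Qed.

Lemma not_absentminded_child J f a : a \in A J ->
  not_absentminded_tree (Decision J f) -> not_absentminded_tree (f a).
Proof.
move=> aA nam p pP; have := nam (a :: p).
by rewrite obs1_tree_Decision /= aA => /(_ pP) /andP[].
Qed.

Lemma infoset_not_occurs_child J f a : a \in A J ->
  not_absentminded_tree (Decision J f) -> ~ infoset_occurs J (f a).
Proof.
move=> aA nam [p pP Jp]; have := nam (a :: p).
by rewrite obs1_tree_Decision /= aA Jp => /(_ pP).
Qed.

Lemma infoset_occurs_child I J f a : a \in A J ->
  infoset_occurs I (f a) -> infoset_occurs I (Decision J f).
Proof.
move=> aA [p pP Ip]; exists (a :: p); first by rewrite /= aA.
by rewrite obs1_tree_Decision inE Ip orbT.
Qed.

Lemma infoset_occurs_root J f : infoset_occurs J (Decision J f).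
Proof.
have [a aA] := set0Pn _ (A_neq0 J).
by exists [:: a]; [rewrite /= aA; case: (f a) | rewrite mem_head].
Qed.

Definition first_action_strategy : Info -> Act -> R := fun J b =>
  if [pick a in A J] is Some a then (b == a)%:R else 0.

Lemma first_action_strategy_pure : pure_strategy first_action_strategy.
Proof.
move=> J; rewrite /first_action_strategy; case: pickP => [a aA|A0].
  by exists a.
by have [a] := set0Pn _ (A_neq0 J); rewrite A0.
Qed.

(* The statement is strengthened to every [pi] agreeing with [sigma] on the
   infosets of [t], so that the strategies built for the subtrees can be
   glued together. *)
Lemma pure_strategy_attains_backward_value t :
  nonneg_decision_tree t -> not_absentminded_tree t ->
  exists2 sigma, pure_strategy sigma &
    forall pi, (forall J, infoset_occurs J t -> pi J =1 sigma J) ->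
      EU_tree A pi t = backward_value t.
Proof.
elim: t => [u|S q f IH|J f IH] //= tJ nam.
  by exists first_action_strategy => //; exact: first_action_strategy_pure.
have [a0 a0A] := set0Pn _ (A_neq0 J).
have [a aA max_a] :=
  eq_bigmax _ _ _ a0A (fun b bA => backward_value_ge0 (tJ b bA)).
have [sigma sigma_pure sigma_val] :=
  IH a (tJ a aA) (not_absentminded_child aA nam).
exists (fun I => if I == J then fun b => (b == a)%:R else sigma I).
  by move=> I; case: eqP => [->|_]; [exists a | exact: sigma_pure].
move=> pi piE; have piJ : pi J =1 fun b => (b == a)%:R.
  by have := piE J; rewrite eqxx; apply; exact: infoset_occurs_root.
rewrite max_a (bigD1 a) //= piJ eqxx mul1r big1 ?addr0; last first.
  by move=> b /andP[_ /negbTE nba]; rewrite piJ nba mul0r.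
apply: sigma_val => I Ia; have := piE I (infoset_occurs_child aA Ia).
case: eqP => // IJ; case: (infoset_not_occurs_child aA nam); by rewrite -IJ.
Qed.

Lemma nonneg_decision_tree_of_nodes t :
  (forall p t', subtree A t p = Some t' -> ~~ is_chance_node t' /\
     (if t' is Leaf u then 0 <= u else True)) ->
  nonneg_decision_tree t.
Proof.
elim: t => [u|S q f IH|J f IH] /= tP.
- by have [] := tP [::] _ erefl.
- by have [] := tP [::] _ erefl.
- by move=> a aA; apply: IH => p t' pt'; apply: (tP (a :: p)); rewrite /= aA.
Qed.

End DecisionTrees.

Section Recall.
Variables (R : realType) (Act : finType) (Info : eqType) (G : game R Act Info).
Implicit Types (t : gtree R Act Info) (p : seq Act).

Lemma EU_pr1_tree pi t p :
  EU_tree (acts (pr1 G)) (fun Jo => pi Jo.1) (pr1_tree G p t) =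
  EU_tree (acts G) pi t.
Proof. by elim: t p => [u|S q f IH|J f IH] p //=; apply: eq_bigr => a _; rewrite IH. Qed.

Lemma backward_value_pr1_tree t p :
  backward_value (acts (pr1 G)) (pr1_tree G p t) = backward_value (acts G) t.
Proof. by elim: t p => [u|S q f IH|J f IH] p //=; apply: eq_bigr => a _; rewrite IH. Qed.

Lemma nonneg_decision_tree_pr1 t p :
  nonneg_decision_tree (acts G) t ->
  nonneg_decision_tree (acts (pr1 G)) (pr1_tree G p t).
Proof. by elim: t p => [u|S q f IH|J f IH] p //= tJ a aA; exact: IH (tJ a aA). Qed.

Lemma U1_pr1 pi : U1 (pr1 G) (fun Jo => pi Jo.1) = U1 G pi.
Proof. exact: EU_pr1_tree. Qed.

Lemma backward_value_pr1 :
  backward_value (acts (pr1 G)) (Defs.root (pr1 G)) =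
  backward_value (acts G) (Defs.root G).
Proof. exact: backward_value_pr1_tree. Qed.

End Recall.

Section Optimality.
Variables (R : realType) (Act : finType) (Info : eqType) (G : game R Act Info).

Lemma optval_optimal sigma : optimal G sigma -> optval G = U1 G sigma.
Proof.
move=> [sigmaS sigma_max]; apply: sup_eq_max; first by exists sigma.
by move=> _ [pi [piS ->]]; exact: sigma_max.
Qed.

Lemma optimal_backward_value sigma :
  nonneg_decision_tree (acts G) (Defs.root G) -> is_pure G sigma ->
  U1 G sigma = backward_value (acts G) (Defs.root G) -> optimal G sigma.
Proof.
move=> rootP sigma_pure sigma_val; split; first exact: pure_strategy_strategy.
by move=> pi piS; rewrite sigma_val; exact: EU_le_backward_value.
Qed.

End Optimality.

Unset Implicit Arguments.

Theorem proposition6 (R : realType) (Act : finType) (Info : eqType)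
    (G : game R Act Info) :
  wf_game G -> no_chance G -> ~ absentminded G ->
  [/\ 0 < optval G -> VoR G = 1,
      exists2 pi, is_pure G pi & optimal G pi
    & exists2 pi, is_pure (pr1 G) pi & optimal (pr1 G) pi].
Proof.
move=> [acts_neq0 nodesP] noChance noAbsent.
have rootP : nonneg_decision_tree (acts G) (Defs.root G).
  apply: nonneg_decision_tree_of_nodes => p t pt; split; first exact: noChance pt.
  by move: (nodesP p t pt); case: t {pt}.
have rootNA : not_absentminded_tree (acts G) (Defs.root G).
  by move=> p pP; apply/negPn/negP => notU; apply: noAbsent; exists p.
have [sigma sigma_pure sigma_val] :=
  pure_strategy_attains_backward_value acts_neq0 rootP rootNA.
pose sigma1 (Jo : Info * seq (Info * Act)) := sigma Jo.1.
have opt : optimal G sigma.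
  by apply: optimal_backward_value => //; apply: sigma_val.
have sigma1_pure : is_pure (pr1 G) sigma1 by move=> Jo; exact: sigma_pure.
have opt1 : optimal (pr1 G) sigma1.
  apply: optimal_backward_value sigma1_pure _; first exact: nonneg_decision_tree_pr1.
  by rewrite U1_pr1 backward_value_pr1; apply: sigma_val.
split; [|by exists sigma|by exists sigma1].
rewrite /VoR (optval_optimal opt) (optval_optimal opt1) U1_pr1 => U1_gt0.
by rewrite divff // gt_eqF.
Qed.
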